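(* Let $k\neq 0$, $a$, $b$ be real numbers and let $\{S^{(a,b)}_{k,n}\}_{n\ge 0}$ be the generalized $k$-FL sequence. (a) For an odd integer $n\ge 1$, the matrix $A^{(k,a,b)}_n$ is invertible if and only if $S^{(a,b)}_{k,n+1}-S^{(a,b)}_{k,n}\neq -bk+2b-a$. (b) For an even integer $n\ge 2$, the matrix $B^{(k,a,b)}_n$ is invertible if and only if $S^{(a,b)}_{k,n+1}-S^{(a,b)}_{k,n}\neq bk-2b+a$ and $S^{(a,b)}_{k,n+1}+S^{(a,b)}_{k,n}\neq bk+2b+a$.
   Context: For real numbers $k,a,b$, the generalized $k$-FL sequence $\{S^{(a,b)}_{k,n}\}_{n\ge0}$ is defined by $S^{(a,b)}_{k,0}=2b$, $S^{(a,b)}_{k,1}=bk+a$, and $S^{(a,b)}_{k,n}=k\,S^{(a,b)}_{k,n-1}+S^{(a,b)}_{k,n-2}$ for $n\ge2$. For $n\ge1$, $A^{(k,a,b)}_n$ is the $n\times n$ real skew circulant matrix with first row $(S^{(a,b)}_{k,1},\dots,S^{(a,b)}_{k,n})$, i.e. its $(i,j)$ entry is $S^{(a,b)}_{k,j-i+1}$ if $j\ge i$ and $-S^{(a,b)}_{k,n+j-i+1}$ if $j<i$. $B^{(k,a,b)}_n$ is the $n\times n$ circulant matrix whose $(i,j)$ entry is $S^{(a,b)}_{k,j-i+1}$ if $j\ge i$ and $S^{(a,b)}_{k,n+j-i+1}$ if $j<i$. *)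

From HB Require Import structures.
From mathcomp Require Import all_boot all_order all_algebra.
From mathcomp Require Import reals.
Set Implicit Arguments. Unset Strict Implicit. Unset Printing Implicit Defensive.
Import Order.TTheory GRing.Theory Num.Theory.
Local Open Scope ring_scope.

(* Generalized k-FL sequence: S 0 = 2b, S 1 = b k + a, S (n+2) = k S (n+1) + S n. *)
Fixpoint FLpair (R : realType) (k a b : R) (n : nat) : R * R :=
  match n with
  | 0%N => (2 * b, b * k + a)
  | m.+1 => let p := FLpair k a b m in (p.2, k * p.2 + p.1)
  end.

Definition FL (R : realType) (k a b : R) (n : nat) : R := (FLpair k a b n).1.

(* Skew circulant matrix A_n with first row (S_1,...,S_n), indices 0-based:
   entry (i,j) = S_{j-i+1} if j >= i, else - S_{n+j-i+1}. *)
Definition skewcircFL (R : realType) (k a b : R) (n : nat) : 'M[R]_n :=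
  \matrix_(i < n, j < n)
    if (i <= j)%N then FL k a b (j - i).+1 else - FL k a b (n + j - i).+1.

Definition circFL (R : realType) (k a b : R) (n : nat) : 'M[R]_n :=
  \matrix_(i < n, j < n)
    if (i <= j)%N then FL k a b (j - i).+1 else FL k a b (n + j - i).+1.

From HB Require Import structures.
From mathcomp Require Import all_boot all_order all_algebra.
From mathcomp Require Import reals.
From mathcomp Require Import zify ring lra.
Set Implicit Arguments. Unset Strict Implicit. Unset Printing Implicit Defensive.
Import Order.TTheory GRing.Theory Num.Theory.
Local Open Scope ring_scope.

(* Both matrices are e-circulant (e = -1, resp. e = 1) with first row
   (S_1, ..., S_N).  Extend a kernel vector v to the e-quasi-periodic sequence
   u (u_(t+N) = e u_t); the entries of G v are then the window sums
   h_i = sum_(m<N) S_(m+1) u_(i+m), and the recurrence of S gives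
   h_(i+2) + k h_(i+1) - h_i = c0 u_i + c1 u_(i+1) with c0 = e S_(N+1) - S_1 and
   c1 = e S_N - S_0.  So G v = 0 forces u to be geometric with a ratio r such
   that r^N = e and c0 + r c1 = 0; conversely, when r^2 = 1 and k != 0, the
   geometric vector (r^j)_j lies in the kernel.  Over the reals the N-th roots
   of -1 (N odd) and of 1 (N even) are among 1 and -1. *)

Definition ecirc_mx (R : pzRingType) (e : R) (S : nat -> R) (n : nat) : 'M[R]_n :=
  \matrix_(i < n, j < n) if (i <= j)%N then S (j - i).+1 else e * S (n + j - i).+1.

Lemma skewcircFL_ecirc (R : realType) (k a b : R) n :
  skewcircFL k a b n = ecirc_mx (-1) (FL k a b) n.
Proof. by apply/matrixP => i j; rewrite !mxE; case: ifP; rewrite ?mulN1r. Qed.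

Lemma circFL_ecirc (R : realType) (k a b : R) n :
  circFL k a b n = ecirc_mx 1 (FL k a b) n.
Proof. by apply/matrixP => i j; rewrite !mxE; case: ifP; rewrite ?mul1r. Qed.

Definition qperiodic (R : pzRingType) (e : R) (N : nat) (u : nat -> R) :=
  forall t, u (t + N)%N = e * u t.

Definition qp_ext (R : pzRingType) (e : R) n (v : 'rV[R]_n.+1) (t : nat) : R :=
  e ^+ (t %/ n.+1) * v 0 (inord (t %% n.+1)).

Lemma qp_ext_qperiodic (R : comPzRingType) (e : R) n (v : 'rV[R]_n.+1) :
  qperiodic e n.+1 (qp_ext e v).
Proof.
move=> t; rewrite /qp_ext modnDr.
have -> : ((t + n.+1) %/ n.+1 = t %/ n.+1 + 1)%N.
  by rewrite -[X in (t + X)%N]mul1n divnDMl.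
by rewrite exprD expr1; ring.
Qed.

Lemma big_ord_shift1 (R : pzRingType) N (x u : nat -> R) i :
  \sum_(m < N) x m.+1 * u (i.+1 + m)%N =
  \sum_(m < N) x m * u (i + m)%N - x 0%N * u i + x N * u (i + N)%N.
Proof.
have recr : \sum_(m < N.+1) x m * u (i + m)%N =
            \sum_(m < N) x m * u (i + m)%N + x N * u (i + N)%N by rewrite big_ord_recr.
have recl : \sum_(m < N.+1) x m * u (i + m)%N =
            x 0%N * u i + \sum_(m < N) x m.+1 * u (i.+1 + m)%N.
  by rewrite big_ord_recl addn0; under eq_bigr do rewrite -addSnnS.
by rewrite addrAC -recr recl addrAC subrr add0r.
Qed.

Section WindowSums.
Variables (R : comPzRingType) (k e : R) (S : nat -> R) (n : nat).
Hypothesis S_rec : forall m, S m.+2 = k * S m.+1 + S m.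
Local Notation N := n.+1.

Definition ecirc_sum (u : nat -> R) (i : nat) : R :=
  \sum_(m < N) S m.+1 * u (i + m)%N.

Lemma ecirc_sum_rec u : qperiodic e N u -> forall i,
  ecirc_sum u i.+2 + k * ecirc_sum u i.+1 - ecirc_sum u i =
  (e * S N.+1 - S 1%N) * u i + (e * S N - S 0%N) * u i.+1.
Proof.
move=> u_qp i.
have S_sum : \sum_(m < N) S m * u (i.+1 + m)%N =
             \sum_(m < N) S m.+2 * u (i.+1 + m)%N - k * ecirc_sum u i.+1.
  by rewrite mulr_sumr -sumrB; apply: eq_bigr => m _; rewrite S_rec; ring.
rewrite /ecirc_sum big_ord_shift1 S_sum.
rewrite (big_ord_shift1 N (fun m => S m.+1)) !u_qp -/(ecirc_sum u i).
rewrite -/(ecirc_sum u i.+1); ring.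
Qed.

Lemma ecirc_sumD u i : qperiodic e N u -> ecirc_sum u (i + N)%N = e * ecirc_sum u i.
Proof.
move=> u_qp; rewrite /ecirc_sum mulr_sumr; apply: eq_bigr => m _.
by rewrite addnAC u_qp; ring.
Qed.

Lemma ecirc_mulmx_tr (v : 'rV[R]_N) (i : 'I_N) :
  (v *m (ecirc_mx e S N)^T) 0 i = ecirc_sum (qp_ext e v) i.
Proof.
rewrite mxE /ecirc_sum.
pose wrap (m : 'I_N) : 'I_N := inord ((i + m) %% N).
have wrap_inj : injective wrap.
  move=> m1 m2 /(congr1 val) /=; rewrite !inordK ?ltn_pmod // => /eqP.
  by rewrite eqn_modDl !modn_small // => /eqP /val_inj.
rewrite (reindex_inj wrap_inj); apply: eq_bigr => m _.
rewrite !mxE /wrap /qp_ext inordK ?ltn_pmod //.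
have := ltn_ord i; have := ltn_ord m.
case: (ltnP (i + m) N) => [im_lt|im_ge] m_lt i_lt.
  by rewrite modn_small // divn_small // leq_addr addKn expr0 mul1r mulrC.
have im_eq : (i + m = 1 * N + (i + m - N))%N by lia.
have -> : ((i + m) %/ N = 1)%N by rewrite im_eq divnMDl // divn_small ?addn0 //; lia.
have -> : ((i + m) %% N = i + m - N)%N by rewrite im_eq modnMDl modn_small //; lia.
have -> : (i <= i + m - N)%N = false by lia.
have -> : (N + (i + m - N) - i)%N = m by lia.
by rewrite expr1; ring.
Qed.

Lemma ecirc_kernel_rel (v : 'rV[R]_N) : v *m (ecirc_mx e S N)^T = 0 ->
  forall i, (e * S N.+1 - S 1%N) * qp_ext e v i + (e * S N - S 0%N) * qp_ext e v i.+1 = 0.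
Proof.
move=> v_ker; have u_qp := qp_ext_qperiodic e v.
have sum0 : forall i, ecirc_sum (qp_ext e v) i = 0.
  elim/ltn_ind => i IH; case: (ltnP i N) => [i_lt | i_ge].
    by rewrite -(ecirc_mulmx_tr _ (Ordinal i_lt)) v_ker mxE.
  by rewrite -(subnK i_ge) ecirc_sumD // IH ?mulr0 //; lia.
by move=> i; rewrite -ecirc_sum_rec // !sum0; ring.
Qed.

End WindowSums.

Lemma qperiodic_rel_geometric (R : fieldType) (e c0 c1 : R) N (u : nat -> R) t :
  qperiodic e N u -> (forall i, c0 * u i + c1 * u i.+1 = 0) -> u t != 0 ->
  (c0 = 0 /\ c1 = 0) \/ exists2 r, r ^+ N = e & c0 + r * c1 = 0.
Proof.
move=> u_qp rel ut_neq0.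
have [c1_0 | c1_neq0] := eqVneq c1 0.
  left; split=> //; have := rel t; rewrite c1_0 mul0r addr0 => /eqP.
  by rewrite mulf_eq0 (negbTE ut_neq0) orbF => /eqP.
right; set r := - c0 / c1.
have uS i : u i.+1 = r * u i.
  apply: (mulfI c1_neq0); rewrite mulrA [c1 * r]mulrC /r divfK //.
  by apply/eqP; rewrite -subr_eq0 mulNr opprK addrC rel.
have u_geom i : u i = r ^+ i * u 0%N.
  by elim: i => [|i IH]; rewrite ?mul1r // uS IH exprS mulrA.
have u0_neq0 : u 0%N != 0 by apply: contraNneq ut_neq0 => u0; rewrite u_geom u0 mulr0.
exists r; last by rewrite divfK // subrr.
by apply: (mulIf u0_neq0); rewrite -u_geom -[N]add0n u_qp.
Qed.

Section EcircUnit.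
Variables (R : fieldType) (k e : R) (S : nat -> R) (n : nat).
Hypothesis S_rec : forall m, S m.+2 = k * S m.+1 + S m.
Hypothesis k_neq0 : k != 0.
Local Notation N := n.+1.
Local Notation G := (ecirc_mx e S N).
Local Notation c0 := (e * S N.+1 - S 1%N).
Local Notation c1 := (e * S N - S 0%N).

Lemma ecirc_geometric_kernel s : s ^+ 2 = 1 -> s ^+ N = e -> c0 + s * c1 = 0 ->
  (\row_(j < N) s ^+ j) *m G^T = 0.
Proof.
move=> s2 sN c_s; set v := \row_(j < N) s ^+ j.
have s_neq0 : s != 0.
  by apply/eqP => s0; move: s2; rewrite s0 expr0n /= => /eqP; rewrite eq_sym oner_eq0.
have v_ext t : qp_ext e v t = s ^+ t.
  by rewrite /qp_ext mxE inordK ?ltn_pmod // -sN -exprM {3}(divn_eq t N) exprD mulnC.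
have sumS i : ecirc_sum S n (qp_ext e v) i.+1 = s * ecirc_sum S n (qp_ext e v) i.
  by rewrite /ecirc_sum mulr_sumr; apply: eq_bigr => m _; rewrite !v_ext addSn exprS; ring.
have sum0 i : ecirc_sum S n (qp_ext e v) i = 0.
  set h := ecirc_sum S n (qp_ext e v) i.
  have rec := ecirc_sum_rec S_rec (qp_ext_qperiodic e v) i.
  rewrite !sumS !v_ext -/h in rec.
  have ksh : k * s * h = (s * (s * h) + k * (s * h) - h) - (s ^+ 2 - 1) * h by ring.
  rewrite rec s2 subrr mul0r subr0 exprS in ksh.
  have : k * s * h = s ^+ i * (c0 + s * c1) by rewrite ksh; ring.
  by rewrite c_s mulr0 => /eqP; rewrite !mulf_eq0 (negbTE k_neq0) (negbTE s_neq0) => /eqP.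
by apply/matrixP => i j; rewrite (ord1 i) ecirc_mulmx_tr mxE sum0.
Qed.

Lemma ecirc_unitmxP :
  (exists r, r ^+ N = e) -> (forall r, r ^+ N = e -> r ^+ 2 = 1) ->
  G \in unitmx <-> (forall r, r ^+ N = e -> c0 + r * c1 != 0).
Proof.
move=> [r0 r0N] roots_sqr1; rewrite unitmxE unitfE -det_tr.
split=> [detG_neq0 r rN | c_neq0].
  apply: contraNneq detG_neq0 => c_r; apply/det0P; exists (\row_(j < N) r ^+ j).
    by apply/rV0Pn; exists ord0; rewrite mxE expr0 oner_neq0.
  exact: ecirc_geometric_kernel (roots_sqr1 r rN) rN c_r.
apply/negP => /det0P [v /rV0Pn [j vj_neq0] v_ker].
have ext_j : qp_ext e v j != 0 by rewrite /qp_ext divn_small // modn_small // inord_val mul1r.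
have [[c0_0 c1_0] | [r rN c_r]] :=
  qperiodic_rel_geometric (qp_ext_qperiodic e v) (ecirc_kernel_rel S_rec v_ker) ext_j.
  by have := c_neq0 r0 r0N; rewrite c0_0 c1_0 mulr0 addr0 eqxx.
by have := c_neq0 r rN; rewrite c_r eqxx.
Qed.

End EcircUnit.

Lemma norm_expr_eq1 (R : realDomainType) (r : R) n :
  (0 < n)%N -> `|r ^+ n| = 1 -> r = 1 \/ r = -1.
Proof.
move=> n_gt0; rewrite normrX => /eqP; rewrite pexpr_eq1 // -sqr_norm_eq1 sqrf_eq1.
by case/orP => /eqP ->; [left | right].
Qed.

Lemma odd_expr_eqN1 (R : realDomainType) (r : R) n : odd n -> r ^+ n = -1 <-> r = -1.
Proof.
move=> n_odd; split=> [rn | ->]; last by rewrite -signr_odd n_odd.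
have [r1 | //] : r = 1 \/ r = -1 by apply: (norm_expr_eq1 (odd_gt0 n_odd)); rewrite rn normrN1.
by rewrite r1 expr1n in rn *.
Qed.

Lemma even_expr_eq1 (R : realDomainType) (r : R) n :
  (0 < n)%N -> ~~ odd n -> r ^+ n = 1 <-> r = 1 \/ r = -1.
Proof.
move=> n_gt0 n_even; split=> [rn | [] ->]; last by rewrite -signr_odd (negbTE n_even).
- by apply: (norm_expr_eq1 n_gt0); rewrite rn normr1.
- exact: expr1n.
Qed.

Theorem theorem2p5 (R : realType) (k a b : R) (hk : k != 0) :
  (forall n : nat, (1 <= n)%N -> odd n ->
     (skewcircFL k a b n \in unitmx) <->
     (FL k a b n.+1 - FL k a b n != - (b * k) + 2 * b - a)) /\
  (forall n : nat, (2 <= n)%N -> ~~ odd n ->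
     (circFL k a b n \in unitmx) <->
     (FL k a b n.+1 - FL k a b n != b * k - 2 * b + a /\
      FL k a b n.+1 + FL k a b n != b * k + 2 * b + a)).
Proof.
have F_rec m : FL k a b m.+2 = k * FL k a b m.+1 + FL k a b m by [].
have F0 : FL k a b 0 = 2 * b by [].
have F1 : FL k a b 1 = b * k + a by [].
split=> -[//|n] _ n_parity.
  have roots (r : R) : r ^+ n.+1 = -1 <-> r = -1 := odd_expr_eqN1 r n_parity.
  have rootN1 : (-1 : R) ^+ n.+1 = -1 by apply/roots.
  rewrite skewcircFL_ecirc; apply: iff_trans (ecirc_unitmxP F_rec hk _ _) _.
  - exists (-1); exact: rootN1.
  - by move=> r /roots ->; rewrite sqrrN expr1n.
  split=> [/(_ _ rootN1) C | C r /roots ->];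
    by apply: contra_neq C; rewrite F0 F1 => E; lra.
have roots (r : R) : r ^+ n.+1 = 1 <-> r = 1 \/ r = -1 := even_expr_eq1 r (ltn0Sn n) n_parity.
have root1 : (1 : R) ^+ n.+1 = 1 by apply/roots; left.
have rootN1 : (-1 : R) ^+ n.+1 = 1 by apply/roots; right.
rewrite circFL_ecirc; apply: iff_trans (ecirc_unitmxP F_rec hk _ _) _.
- exists 1; exact: root1.
- by move=> r /roots [] ->; rewrite ?sqrrN expr1n.
split=> [C | [C1 C2] r /roots [] ->].
- by split; [have := C _ rootN1 | have := C _ root1]; apply: contra_neq; rewrite F0 F1 => E; lra.
- by apply: contra_neq C2; rewrite F0 F1 => E; lra.
- by apply: contra_neq C1; rewrite F0 F1 => E; lra.
Qed.
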